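(* Let $H$ and $K$ be finite-dimensional complex Hilbert spaces, let $\mathcal{C}$ be a mapping cone on $K$, and let $B$ be a C*-subalgebra of $B(H)$ containing the identity $1$. If $\phi: B\to B(K)$ is a $\mathcal{C}$-positive linear map, then there is a $\mathcal{C}$-positive linear map $\psi: B(H)\to B(K)$ extending $\phi$.
   Context: A mapping cone $\mathcal{C}$ on $K$ is a closed convex cone of positive linear maps $B(K)\to B(K)$ such that $\alpha\in\mathcal{C}$ implies $\beta\circ\alpha\circ\gamma\in\mathcal{C}$ for all completely positive maps $\beta,\gamma: B(K)\to B(K)$. Fix an orthonormal basis of $K$ and let $b^t$ denote the transpose of $b\in B(K)$; $Tr$ is the usual trace. For a linear subspace $A\subseteq B(H)$ containing $1$, let $A\otimes B(K)\subseteq B(H\otimes K)$ be the span of $\{a\otimes b: a\in A, b\in B(K)\}$. For a linear map $\phi: A\to B(K)$, its dual functional $\tilde\phi$ is the linear functional on $A\otimes B(K)$ with $\tilde\phi(a\otimes b)=Tr(\phi(a)b^t)$. Let $P(A,\mathcal{C})=\{x\in (A\otimes B(K))_{sa} : (\iota\otimes\alpha)(x)\ge 0 \ \forall \alpha\in\mathcal{C}\}$, with $\iota$ the identity map on $B(H)$. The map $\phi$ is $\mathcal{C}$-positive if $\tilde\phi(x)\ge 0$ for all $x\in P(A,\mathcal{C})$. *)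

From HB Require Import structures.
From mathcomp Require Import all_boot all_order all_algebra.
From mathcomp Require Import complex mxtens.
From mathcomp Require Import boolp classical_sets filter reals topology normedtype.
Set Implicit Arguments. Unset Strict Implicit. Unset Printing Implicit Defensive.
Import Order.TTheory GRing.Theory Num.Theory.
Import numFieldNormedType.Exports.
Local Open Scope ring_scope.
Local Open Scope classical_set_scope.

(* B(H) with dim H = n is 'M[R[i]]_n; B(K) with dim K = k is 'M[R[i]]_k.
   H (x) K = C^(n*k), with the Kronecker index convention of mxtens. *)

Section Defs.
Variable R : realType.
Local Notation C := R[i].

Definition adjmx m p (A : 'M[C]_(m, p)) : 'M[C]_(p, m) := (map_mx Num.conj A)^T.

Definition hermitian m (A : 'M[C]_m) := adjmx A = A.

(* positive (semidefinite) operator: <v, A v> >= 0 for all v (in the order of C,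
   0 <= z means z is real and nonnegative) *)
Definition psd m (A : 'M[C]_m) := forall v : 'cV[C]_m, 0 <= (adjmx v *m A *m v) 0 0.

Definition lin m p (f : 'M[C]_m -> 'M[C]_p) :=
  forall (c : C) x y, f (c *: x + y) = c *: f x + f y.

Definition positive_map m p (f : 'M[C]_m -> 'M[C]_p) :=
  lin f /\ forall x, psd x -> psd (f x).

Definition blk m k (X : 'M[C]_(m * k)) (i j : 'I_m) : 'M[C]_k :=
  \matrix_(a, b) X (mxtens_index (i, a)) (mxtens_index (j, b)).

(* ampliation (iota (x) alpha) on B(C^m (x) C^k) *)
Definition amp m k (alpha : 'M[C]_k -> 'M[C]_k) (X : 'M[C]_(m * k)) : 'M[C]_(m * k) :=
  \matrix_(p, q) alpha (blk X (mxtens_unindex p).1 (mxtens_unindex q).1)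
                       (mxtens_unindex p).2 (mxtens_unindex q).2.

Definition completely_positive k (f : 'M[C]_k -> 'M[C]_k) :=
  lin f /\ forall m (X : 'M[C]_(m * k)), psd X -> psd (amp f X).

Definition mx_cvg m p (u : nat -> 'M[C]_(m, p)) (l : 'M[C]_(m, p)) :=
  forall i j, (fun t => complex.Re (u t i j)) @ \oo --> complex.Re (l i j) /\
              (fun t => complex.Im (u t i j)) @ \oo --> complex.Im (l i j).

Definition mapping_cone k (Cc : set ('M[C]_k -> 'M[C]_k)) :=
  [/\ (forall a, Cc a -> positive_map a),
      (forall a b, Cc a -> Cc b -> Cc (fun x => a x + b x)),
      (forall (c : C) a, 0 <= c -> Cc a -> Cc (fun x => c *: a x)),
      (forall (s : nat -> 'M[C]_k -> 'M[C]_k) a,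
          (forall t, Cc (s t)) -> (forall x, mx_cvg (fun t => s t x) (a x)) -> Cc a) &
      (forall a b g, Cc a -> completely_positive b -> completely_positive g ->
          Cc (b \o a \o g))].

(* unital C*-subalgebra of B(C^n) (finite dimensional: a unital *-subalgebra) *)
Definition unital_Cstar_subalg n (B : set 'M[C]_n) :=
  [/\ B 1%:M,
      (forall x y, B x -> B y -> B (x + y)),
      (forall (c : C) x, B x -> B (c *: x)),
      (forall x y, B x -> B y -> B (x *m y)) &
      (forall x, B x -> B (adjmx x))].

(* phi : A -> B(K) is linear (values outside A are irrelevant) *)
Definition lin_on n k (A : set 'M[C]_n) (phi : 'M[C]_n -> 'M[C]_k) :=
  forall (c : C) x y, A x -> A y -> phi (c *: x + y) = c *: phi x + phi y.

Definition inP n k (Cc : set ('M[C]_k -> 'M[C]_k)) (x : 'M[C]_(n * k)) :=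
  hermitian x /\ forall alpha, Cc alpha -> psd (amp alpha x).

(* phi is C-positive: the dual functional phi~, given on a representation
   x = sum_i a_i (x) b_i (a_i in A) by sum_i Tr(phi(a_i) b_i^t),
   is nonnegative on P(A, C). Every element of A (x) B(K) has such a representation. *)
Definition C_positive n k (A : set 'M[C]_n) (Cc : set ('M[C]_k -> 'M[C]_k))
    (phi : 'M[C]_n -> 'M[C]_k) :=
  forall N (a : 'I_N -> 'M[C]_n) (b : 'I_N -> 'M[C]_k),
    (forall i, A (a i)) ->
    inP Cc (\sum_(i < N) (a i *t b i)) ->
    0 <= \sum_(i < N) \tr (phi (a i) *m (b i)^T).

End Defs.

From Pilot Require Import Defs.
From HB Require Import structures.
From mathcomp Require Import all_boot all_order all_algebra.
From mathcomp Require Import complex mxtens.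
From mathcomp Require Import boolp classical_sets filter reals topology normedtype.
From mathcomp Require Import ring lra.
Set Implicit Arguments. Unset Strict Implicit. Unset Printing Implicit Defensive.
Import Order.TTheory GRing.Theory Num.Theory.
Local Open Scope ring_scope.
Local Open Scope classical_set_scope.

(* The dual functional phi~ of phi is a well-defined linear functional on
   B (x) B(K) that is nonnegative on the cone P(B, C). On the real space of
   hermitian matrices of B(H (x) K) the identity is an order unit for
   P(B(H), C): for every positive map alpha, (iota (x) alpha)(t 1 - X) >= 0 as
   soon as t bounds the hermitian parts of the blocks of X. Hence every
   hermitian matrix is dominated by a multiple of 1, which lies in B (x) B(K),
   and the M. Riesz extension theorem, applied one dimension at a time along a
   spanning family, extends Re phi~ to a positive functional F on all hermitian
   matrices. Its complexification G is positive on P(B(H), C), and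
   psi(a)_pq := G(a (x) e_pq) is the required extension. *)

Section RieszExtension.
Variables (R : realType) (V : lmodType R) (P : set V).
Hypothesis coneD : forall x y, P x -> P y -> P (x + y).
Hypothesis coneZ : forall (r : R) x, 0 <= r -> P x -> P (r *: x).

Definition subspace (W : set V) :=
  W 0 /\ forall (r : R) x y, W x -> W y -> W (r *: x + y).

Definition linear_on (W : set V) (f : V -> R) :=
  forall (r : R) x y, W x -> W y -> f (r *: x + y) = r * f x + f y.

Definition positive_on (W : set V) (f : V -> R) :=
  forall x, W x -> P x -> 0 <= f x.

Definition majorized (W : set V) v := exists2 w, W w & P (w - v).

Definition adjoin (W : set V) v : set V :=
  [set x | exists w t, W w /\ x = w + t *: v].

Section Subspace.
Variables (W : set V) (f : V -> R).
Hypothesis W_subspace : subspace W.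

Lemma subspace0 : W 0. Proof. by case: W_subspace. Qed.

Lemma subspaceD x y : W x -> W y -> W (x + y).
Proof. by move=> Wx Wy; have := W_subspace.2 1 x y Wx Wy; rewrite scale1r. Qed.

Lemma subspaceZ r x : W x -> W (r *: x).
Proof. by move=> Wx; have := W_subspace.2 r x 0 Wx subspace0; rewrite addr0. Qed.

Lemma subspaceB x y : W x -> W y -> W (x - y).
Proof. by move=> Wx Wy; rewrite -scaleN1r; apply/subspaceD/subspaceZ. Qed.

Lemma subspace_sum I (r : seq I) (F : I -> V) :
  (forall i, W (F i)) -> W (\sum_(i <- r) F i).
Proof.
by move=> WF; elim/big_rec: _ => [|i x _ Wx]; [exact: subspace0 | exact: subspaceD].
Qed.

Hypothesis f_linear : linear_on W f.

Lemma linear_on0 : f 0 = 0.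
Proof.
have := @f_linear 1 0 0 subspace0 subspace0; rewrite scale1r addr0 mul1r.
by move=> h; apply: (addrI (f 0)); rewrite addr0 -h.
Qed.

Lemma linear_onZ r x : W x -> f (r *: x) = r * f x.
Proof.
by move=> Wx; have := @f_linear r x 0 Wx subspace0; rewrite !addr0 linear_on0 addr0.
Qed.

Lemma linear_onD x y : W x -> W y -> f (x + y) = f x + f y.
Proof. by move=> Wx Wy; have := @f_linear 1 x y Wx Wy; rewrite scale1r mul1r. Qed.

Lemma linear_onB x y : W x -> W y -> f (x - y) = f x - f y.
Proof.
move=> Wx Wy; rewrite -scaleN1r addrC f_linear ?linear_onZ //.
by rewrite mulN1r addrC.
Qed.

Lemma linear_onN x : W x -> f (- x) = - f x.
Proof. by move=> Wx; rewrite -sub0r (linear_onB subspace0 Wx) linear_on0 sub0r. Qed.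

End Subspace.

Lemma adjoin_subspace W v : subspace W -> subspace (adjoin W v).
Proof.
move=> sW; split; first by exists 0, 0; rewrite scale0r addr0; split => //; exact: subspace0.
move=> r x y [w1 [t1 [W1 ->]]] [w2 [t2 [W2 ->]]].
exists (r *: w1 + w2), (r * t1 + t2); split; first exact: sW.2.
by rewrite scalerDr scalerDl scalerA addrACA.
Qed.

Lemma sub_adjoin W v : W `<=` adjoin W v.
Proof. by move=> x Wx; exists x, 0; rewrite scale0r addr0. Qed.

Lemma adjoin_self W v : subspace W -> adjoin W v v.
Proof. by move=> sW; exists 0, 1; rewrite scale1r add0r; split => //; exact: subspace0. Qed.

Lemma majorized_sub W W' v : W `<=` W' -> majorized W v -> majorized W' v.
Proof. by move=> sub [w Ww Pw]; exists w => //; apply: sub. Qed.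

Section AdjoinOne.
Variables (W : set V) (f : V -> R) (v : V).
Hypotheses (W_subspace : subspace W) (f_linear : linear_on W f) (Wv : ~ W v).

Lemma adjoin_coord_inj a b t s : W a -> W b -> a + t *: v = b + s *: v -> a = b /\ t = s.
Proof.
move=> Wa Wb E; suff ts : t = s by split => //; move: E; rewrite ts => /addIr.
apply/eqP; rewrite -subr_eq0; apply/negPn/negP => nz; apply: Wv.
have dv : (t - s) *: v = b - a.
  by rewrite scalerBl; apply/eqP; rewrite subr_eq addrAC -E addrC addKr.
have -> : v = (t - s)^-1 *: (b - a) by rewrite -dv scalerA mulVf ?scale1r.
by apply: subspaceZ => //; apply: subspaceB.
Qed.

Lemma adjoin_linear_extension c : exists F, linear_on (adjoin W v) F /\
  forall w t, W w -> F (w + t *: v) = f w + t * c.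
Proof.
pose F x := if pselect (exists p : V * R, W p.1 /\ x = p.1 + p.2 *: v) is left h
  then let p := projT1 (cid h) in f p.1 + p.2 * c else 0.
have FE w t : W w -> F (w + t *: v) = f w + t * c.
  move=> Ww; rewrite /F; case: pselect => [h|[]]; last by exists (w, t).
  case: (cid h) => [[a b] /= [Wa E]].
  by have [-> ->] := adjoin_coord_inj Wa Ww (esym E).
exists F; split => // r x y [a [t [Wa ->]]] [b [s [Wb ->]]].
have -> : r *: (a + t *: v) + (b + s *: v) = (r *: a + b) + (r * t + s) *: v.
  by rewrite scalerDr scalerDl scalerA addrACA.
rewrite !FE ?f_linear //; last exact: W_subspace.2.
by rewrite mulrDr mulrDl mulrA addrACA.
Qed.

End AdjoinOne.

Lemma adjoin_positive_extension W f v c F :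
  subspace W -> linear_on W f -> positive_on W f ->
  (forall w, W w -> P (v - w) -> f w <= c) -> (forall u, W u -> P (u - v) -> c <= f u) ->
  (forall w t, W w -> F (w + t *: v) = f w + t * c) -> positive_on (adjoin W v) F.
Proof.
move=> sW lf pf lower upper FE _ [w [t [Ww ->]]]; rewrite FE //.
have [t_lt0|t_gt0|->] := ltrgtP t 0.
- move=> Px; have nt : 0 < - t by rewrite oppr_gt0.
  have e : (- t)^-1 *: w - v = (- t)^-1 *: (w + t *: v).
    by rewrite scalerDr scalerA invrN mulNr mulVf ?lt_eqF // scaleN1r.
  have := upper ((- t)^-1 *: w) (subspaceZ sW _ Ww); rewrite e (linear_onZ sW lf) //.
  have it : 0 <= (- t)^-1 by rewrite invr_ge0 ltW.
  move=> /(_ (coneZ it Px))/(ler_wpM2l (ltW nt)).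
  by rewrite mulrA mulfV ?gt_eqF // mul1r; lra.
- move=> Px; have e : v - - t^-1 *: w = t^-1 *: (w + t *: v).
    by rewrite scaleNr opprK scalerDr scalerA mulVf ?gt_eqF // scale1r addrC.
  have := lower (- t^-1 *: w) (subspaceZ sW _ Ww); rewrite e (linear_onZ sW lf) //.
  have it : 0 <= t^-1 by rewrite invr_ge0 ltW.
  move=> /(_ (coneZ it Px))/(ler_wpM2l (ltW t_gt0)).
  by rewrite mulrA mulrN mulfV ?gt_eqF //; lra.
- by rewrite scale0r mul0r !addr0; apply: pf.
Qed.

Lemma riesz_extension_step W f v : subspace W -> linear_on W f -> positive_on W f ->
  majorized W v -> majorized W (- v) ->
  exists F, [/\ linear_on (adjoin W v) F, positive_on (adjoin W v) F &
                forall x, W x -> F x = f x].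
Proof.
move=> sW lf pf [u Wu Pu] [w0 Ww0 Pw0].
have [Wv|Wv] := pselect (W v).
  have sub : adjoin W v `<=` W.
    by move=> x [w [t [Ww ->]]]; apply: subspaceD => //; apply: subspaceZ.
  by exists f; split => // [r x y /sub Wx /sub Wy|x /sub Wx]; [apply: lf | apply: pf].
pose L := [set f w | w in [set w | W w /\ P (v - w)]].
have L_ub u' : W u' -> P (u' - v) -> ubound L (f u').
  move=> Wu' Pu' _ [w [Ww Pw] <-]; rewrite -subr_ge0 -(linear_onB lf) //.
  apply: pf; first exact: subspaceB.
  by have := coneD Pu' Pw; rewrite addrA subrK.
have L_sup : has_sup L.
  split; last by exists (f u); apply: L_ub.
  exists (f (- w0)), (- w0) => //; split; first by rewrite -scaleN1r; apply: subspaceZ.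
  by rewrite opprK addrC; move: Pw0; rewrite opprK.
have [F [lF FE]] := adjoin_linear_extension sW lf Wv (sup L).
exists F; split => //.
  apply: adjoin_positive_extension FE => // [w Ww Pw | u' Wu' Pu'].
    by apply: (ub_le_sup (proj2 L_sup)); exists w.
  exact: ge_sup (proj1 L_sup) (L_ub _ Wu' Pu').
by move=> x Wx; have := FE x 0 Wx; rewrite scale0r addr0 mul0r addr0.
Qed.

Fixpoint adjoin_seq (W : set V) (s : seq V) : set V :=
  if s is v :: s' then adjoin_seq (adjoin W v) s' else W.

Lemma adjoin_seq_subspace s W : subspace W -> subspace (adjoin_seq W s).
Proof. by elim: s W => [|v s IH] W sW //=; apply/IH/adjoin_subspace. Qed.

Lemma sub_adjoin_seq s W : W `<=` adjoin_seq W s.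
Proof. by elim: s W => [|v s IH] W x Wx //=; apply/IH/sub_adjoin. Qed.

Lemma adjoin_seq_mem s W v : subspace W -> v \in s -> adjoin_seq W s v.
Proof.
elim: s W => [|u s IH] W sW //=; rewrite in_cons => /predU1P [->|vs].
  by apply/sub_adjoin_seq/adjoin_self.
by apply: IH => //; apply: adjoin_subspace.
Qed.

Theorem riesz_extension s W f : subspace W -> linear_on W f -> positive_on W f ->
  (forall v, v \in s -> majorized W v /\ majorized W (- v)) ->
  exists F, [/\ linear_on (adjoin_seq W s) F, positive_on (adjoin_seq W s) F &
                forall x, W x -> F x = f x].
Proof.
elim: s W f => [|v s IH] W f sW lf pf maj /=; first by exists f.
have [majv majNv] := maj v (mem_head _ _).
have [F1 [lF1 pF1 eF1]] := riesz_extension_step sW lf pf majv majNv.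
have maj1 u : u \in s -> majorized (adjoin W v) u /\ majorized (adjoin W v) (- u).
  move=> us; have [] := maj u (mem_behead (s := v :: s) us).
  by split; apply: majorized_sub (@sub_adjoin W v) _.
have [F [lF pF eF]] := IH _ F1 (adjoin_subspace v sW) lF1 pF1 maj1.
by exists F; split => // x Wx; rewrite eF ?eF1 //; apply: sub_adjoin.
Qed.

End RieszExtension.

Section AdjointAndForms.
Variable R : realType.
Local Notation C := R[i].

Lemma adjmxE m p (A : 'M[C]_(m, p)) i j : adjmx A i j = (A j i)^*.
Proof. by rewrite !mxE. Qed.

Lemma adjmxK m p (A : 'M[C]_(m, p)) : adjmx (adjmx A) = A.
Proof. by apply/matrixP => i j; rewrite !adjmxE conjCK. Qed.

Lemma adjmxD m p (A B : 'M[C]_(m, p)) : adjmx (A + B) = adjmx A + adjmx B.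
Proof. by apply/matrixP => i j; rewrite !mxE rmorphD. Qed.

Lemma adjmxZ m p (c : C) (A : 'M[C]_(m, p)) : adjmx (c *: A) = c^* *: adjmx A.
Proof. by apply/matrixP => i j; rewrite !mxE rmorphM. Qed.

Lemma adjmxN m p (A : 'M[C]_(m, p)) : adjmx (- A) = - adjmx A.
Proof. by apply/matrixP => i j; rewrite !mxE rmorphN. Qed.

Lemma adjmx0 m p : adjmx (0 : 'M[C]_(m, p)) = 0.
Proof. by apply/matrixP => i j; rewrite !mxE rmorph0. Qed.

Lemma adjmx1 m : adjmx (1%:M : 'M[C]_m) = 1%:M.
Proof. by apply/matrixP => i j; rewrite !mxE rmorphMn rmorph1 eq_sym. Qed.

Lemma adjmx_sum m p I (r : seq I) (F : I -> 'M[C]_(m, p)) :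
  adjmx (\sum_(i <- r) F i) = \sum_(i <- r) adjmx (F i).
Proof. by elim/big_rec2: _ => [|i y1 y2 _ <-]; rewrite ?adjmx0 ?adjmxD. Qed.

Lemma adjmx_tens m1 p1 m2 p2 (A : 'M[C]_(m1, p1)) (B : 'M[C]_(m2, p2)) :
  adjmx (A *t B) = adjmx A *t adjmx B.
Proof. by apply/matrixP => i j; rewrite !mxE rmorphM. Qed.

Definition mxform m (A : 'M[C]_m) (x y : 'cV[C]_m) : C := (adjmx x *m A *m y) 0 0.

Lemma mxformE m (A : 'M[C]_m) x y :
  mxform A x y = \sum_a \sum_b (x a 0)^* * A a b * y b 0.
Proof.
rewrite /mxform mxE; under eq_bigr do rewrite mxE mulr_suml.
rewrite exchange_big /=; apply: eq_bigr => a _; apply: eq_bigr => b _.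
by rewrite adjmxE.
Qed.

Lemma mxformDA m (A B : 'M[C]_m) x y : mxform (A + B) x y = mxform A x y + mxform B x y.
Proof. by rewrite /mxform mulmxDr mulmxDl mxE. Qed.

Lemma mxformZA m (c : C) (A : 'M[C]_m) x y : mxform (c *: A) x y = c * mxform A x y.
Proof. by rewrite /mxform -scalemxAr -scalemxAl mxE. Qed.

Lemma mxformNA m (A : 'M[C]_m) x y : mxform (- A) x y = - mxform A x y.
Proof. by rewrite -scaleN1r mxformZA mulN1r. Qed.

Lemma mxformBA m (A B : 'M[C]_m) x y : mxform (A - B) x y = mxform A x y - mxform B x y.
Proof. by rewrite mxformDA mxformNA. Qed.

Lemma mxform0A m (x y : 'cV[C]_m) : mxform 0 x y = 0.
Proof. by rewrite /mxform mulmx0 mul0mx mxE. Qed.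

Lemma mxformDl m (A : 'M[C]_m) x x' y : mxform A (x + x') y = mxform A x y + mxform A x' y.
Proof. by rewrite /mxform adjmxD !mulmxDl mxE. Qed.

Lemma mxformDr m (A : 'M[C]_m) x y y' : mxform A x (y + y') = mxform A x y + mxform A x y'.
Proof. by rewrite /mxform mulmxDr mxE. Qed.

Lemma mxformZl m (A : 'M[C]_m) c x y : mxform A (c *: x) y = c^* * mxform A x y.
Proof. by rewrite /mxform adjmxZ -!scalemxAl mxE. Qed.

Lemma mxformZr m (A : 'M[C]_m) c x y : mxform A x (c *: y) = c * mxform A x y.
Proof. by rewrite /mxform -scalemxAr mxE. Qed.

Lemma mxformNl m (A : 'M[C]_m) x y : mxform A (- x) y = - mxform A x y.
Proof. by rewrite -scaleN1r mxformZl rmorphN1 mulN1r. Qed.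

Lemma mxformNr m (A : 'M[C]_m) x y : mxform A x (- y) = - mxform A x y.
Proof. by rewrite -scaleN1r mxformZr mulN1r. Qed.

Lemma mxform_adj m (A : 'M[C]_m) x y : mxform (adjmx A) y x = (mxform A x y)^*.
Proof.
rewrite !mxformE exchange_big rmorph_sum; apply: eq_bigr => a _.
rewrite rmorph_sum; apply: eq_bigr => b _.
by rewrite adjmxE !rmorphM /= conjCK; ring.
Qed.

Lemma mxform_delta m (A : 'M[C]_m) a b :
  mxform A (delta_mx a 0) (delta_mx b 0) = A a b.
Proof.
rewrite /mxform (_ : adjmx _ = delta_mx 0 a) -?rowE -?colE ?mxE //.
by apply/matrixP => i j; rewrite !mxE rmorph_nat andbC.
Qed.

Lemma mxform_eq0 m (D : 'M[C]_m) : (forall x, mxform D x x = 0) -> D = 0.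
Proof.
move=> D0; apply/matrixP => a b; rewrite mxE -mxform_delta.
set x := delta_mx a 0; set y := delta_mx b 0.
have := D0 (x + y); have := D0 (x + 'i *: y).
rewrite !(mxformDl, mxformDr, mxformZl, mxformZr) !D0 conjCi.
rewrite !mulr0 mulNr !(addr0, add0r) -mulrBr => /eqP.
rewrite mulf_eq0 (negbTE (neq0Ci _)) subr_eq0 => /eqP ->.
by rewrite -mulr2n => /eqP; rewrite mulrn_eq0 => /eqP.
Qed.

Lemma real_mxform_hermitian m (A : 'M[C]_m) :
  (forall x, mxform A x x \is Num.real) -> Defs.hermitian A.
Proof.
move=> realA; apply/eqP; rewrite -subr_eq0; apply/eqP/mxform_eq0 => x.
by rewrite mxformBA mxform_adj (CrealP (realA x)) subrr.
Qed.

Lemma hermitian_mxform_real m (A : 'M[C]_m) x : Defs.hermitian A -> mxform A x x \is Num.real.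
Proof. by move=> hA; rewrite CrealE -mxform_adj hA. Qed.

Lemma hermitian0 m : Defs.hermitian (0 : 'M[C]_m).
Proof. exact: adjmx0. Qed.

Lemma hermitian1 m : Defs.hermitian (1%:M : 'M[C]_m).
Proof. exact: adjmx1. Qed.

Lemma hermitianD m (A B : 'M[C]_m) :
  Defs.hermitian A -> Defs.hermitian B -> Defs.hermitian (A + B).
Proof. by move=> hA hB; rewrite /Defs.hermitian adjmxD hA hB. Qed.

Lemma hermitianN m (A : 'M[C]_m) : Defs.hermitian A -> Defs.hermitian (- A).
Proof. by move=> hA; rewrite /Defs.hermitian adjmxN hA. Qed.

Lemma hermitianB m (A B : 'M[C]_m) :
  Defs.hermitian A -> Defs.hermitian B -> Defs.hermitian (A - B).
Proof. by move=> hA hB; apply/hermitianD/hermitianN. Qed.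

Lemma hermitianZ m (c : C) (A : 'M[C]_m) :
  c \is Num.real -> Defs.hermitian A -> Defs.hermitian (c *: A).
Proof. by move=> /CrealP rc hA; rewrite /Defs.hermitian adjmxZ hA rc. Qed.

Definition mxRe m (Z : 'M[C]_m) := 2^-1 *: (Z + adjmx Z).
Definition mxIm m (Z : 'M[C]_m) := mxRe (- 'i *: Z).

Lemma conjC_half : (2^-1 : C)^* = 2^-1.
Proof. by apply/CrealP; rewrite rpredV realn. Qed.

Lemma mxRe_hermitian m (Z : 'M[C]_m) : Defs.hermitian (mxRe Z).
Proof. by rewrite /Defs.hermitian adjmxZ adjmxD adjmxK conjC_half addrC. Qed.

Lemma mxIm_hermitian m (Z : 'M[C]_m) : Defs.hermitian (mxIm Z).
Proof. exact: mxRe_hermitian. Qed.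

Lemma mxRe_id m (Z : 'M[C]_m) : Defs.hermitian Z -> mxRe Z = Z.
Proof.
move=> hZ; rewrite /mxRe hZ -mulr2n -scalerMnr scalerMnl -mulr_natr.
by rewrite mulVf ?pnatr_eq0 ?scale1r.
Qed.

Lemma mxRe_Im m (Z : 'M[C]_m) : mxRe Z + 'i *: mxIm Z = Z.
Proof.
rewrite /mxIm /mxRe adjmxZ rmorphN /= conjCi opprK scalerA mulrC -scalerA.
have -> : 'i *: (- 'i *: Z + 'i *: adjmx Z) = Z - adjmx Z.
  by rewrite scalerDr !scalerA mulrN -expr2 sqrCi opprK scale1r scaleN1r.
rewrite -scalerDr addrACA subrr addr0 -mulr2n -scalerMnr scalerMnl -mulr_natr.
by rewrite mulVf ?pnatr_eq0 ?scale1r.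
Qed.

End AdjointAndForms.

Section HermitianParts.
Variable R : realType.
Local Notation C := R[i].
Variable m : nat.
Implicit Types X Y : 'M[C]_m.

Lemma mxReD X Y : mxRe (X + Y) = mxRe X + mxRe Y.
Proof. by rewrite /mxRe adjmxD -scalerDr addrACA. Qed.

Lemma mxReN X : mxRe (- X) = - mxRe X.
Proof. by rewrite /mxRe adjmxN -opprD scalerN. Qed.

Lemma mxReZ_real (c : C) X : c \is Num.real -> mxRe (c *: X) = c *: mxRe X.
Proof. by move=> /CrealP rc; rewrite /mxRe adjmxZ rc -scalerDr !scalerA mulrC. Qed.

Lemma mxRe_sum I (r : seq I) (F : I -> 'M[C]_m) :
  mxRe (\sum_(i <- r) F i) = \sum_(i <- r) mxRe (F i).
Proof.
elim/big_rec2: _ => [|i y1 y2 _ <-]; last exact: mxReD.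
by rewrite /mxRe adjmx0 addr0 scaler0.
Qed.

Lemma mxImD X Y : mxIm (X + Y) = mxIm X + mxIm Y.
Proof. by rewrite /mxIm scalerDr mxReD. Qed.

Lemma mxImZ_real (c : C) X : c \is Num.real -> mxIm (c *: X) = c *: mxIm X.
Proof. by move=> rc; rewrite /mxIm scalerA mulrC -scalerA mxReZ_real. Qed.

Lemma mxRe_i X : mxRe ('i *: X) = - mxIm X.
Proof. by rewrite /mxIm scaleNr mxReN opprK. Qed.

Lemma mxIm_i X : mxIm ('i *: X) = mxRe X.
Proof. by rewrite /mxIm scalerA mulNr -expr2 sqrCi opprK scale1r. Qed.

Lemma mxIm_hermitian0 X : Defs.hermitian X -> mxIm X = 0.
Proof.
move=> hX; rewrite /mxIm /mxRe adjmxZ hX rmorphN /= conjCi opprK.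
by rewrite scaleNr addNr scaler0.
Qed.

End HermitianParts.

Section PositiveMaps.
Variable R : realType.
Local Notation C := R[i].

Section Linear.
Variables (m p : nat) (f : 'M[C]_m -> 'M[C]_p).
Hypothesis f_lin : lin f.

Lemma lin0 : f 0 = 0.
Proof.
have := f_lin 1 0 0; rewrite scale1r addr0 scale1r => h.
by apply: (addrI (f 0)); rewrite addr0 -h.
Qed.

Lemma linD x y : f (x + y) = f x + f y.
Proof. by have := f_lin 1 x y; rewrite !scale1r. Qed.

Lemma linZ c x : f (c *: x) = c *: f x.
Proof. by have := f_lin c x 0; rewrite !addr0 lin0 addr0. Qed.

Lemma linN x : f (- x) = - f x.
Proof. by rewrite -scaleN1r linZ scaleN1r. Qed.

Lemma linB x y : f (x - y) = f x - f y.
Proof. by rewrite linD linN. Qed.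

End Linear.

Lemma psd_hermitian m (A : 'M[C]_m) : psd A -> Defs.hermitian A.
Proof. by move=> pA; apply: real_mxform_hermitian => x; apply/ger0_real/pA. Qed.

Lemma mxform1 m (x : 'cV[C]_m) : mxform 1%:M x x = \sum_a `|x a 0| ^+ 2.
Proof.
rewrite mxformE; apply: eq_bigr => a _.
rewrite (bigD1 a) //= big1 ?addr0; last first.
  by move=> b /negPf ab; rewrite mxE eq_sym ab mulr0 mul0r.
by rewrite mxE eqxx mulr1 mulrC -normCK.
Qed.

Lemma psd1 m : psd (1%:M : 'M[C]_m).
Proof.
by move=> x; rewrite -/(mxform _ x x) mxform1; apply: sumr_ge0 => a _; rewrite exprn_ge0.
Qed.

Lemma psdD m (A B : 'M[C]_m) : psd A -> psd B -> psd (A + B).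
Proof. by move=> pA pB x; rewrite -/(mxform _ x x) mxformDA addr_ge0 ?pA ?pB. Qed.

Lemma psdZ m (c : C) (A : 'M[C]_m) : 0 <= c -> psd A -> psd (c *: A).
Proof. by move=> c0 pA x; rewrite -/(mxform _ x x) mxformZA; apply: mulr_ge0 c0 (pA x). Qed.

Lemma mulr_le_sqrD (u v : C) : 0 <= u -> 0 <= v -> u * v <= u ^+ 2 + v ^+ 2.
Proof.
move=> u0 v0; rewrite -subr_ge0.
have -> : u ^+ 2 + v ^+ 2 - u * v = (u - v) ^+ 2 + u * v by ring.
by apply: addr_ge0; [rewrite -realEsqr rpredB ?ger0_real | exact: mulr_ge0].
Qed.

Lemma row_le_sum2 m (F : 'I_m -> 'I_m -> C) i :
  (forall i j, 0 <= F i j) -> \sum_j F i j <= \sum_i \sum_j F i j.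
Proof.
move=> F0; rewrite [leRHS](bigD1 i) //= lerDl.
by apply: sumr_ge0 => i' _; apply: sumr_ge0.
Qed.

Lemma col_le_sum2 m (F : 'I_m -> 'I_m -> C) j :
  (forall i j, 0 <= F i j) -> \sum_i F i j <= \sum_i \sum_j F i j.
Proof. by move=> F0; rewrite [leRHS]exchange_big row_le_sum2. Qed.

Definition mxl1 m (A : 'M[C]_m) := \sum_a \sum_b `|A a b|.

Lemma mxl1_ge0 m (A : 'M[C]_m) : 0 <= mxl1 A.
Proof. by apply: sumr_ge0 => a _; apply: sumr_ge0. Qed.

Lemma mxl1N m (A : 'M[C]_m) : mxl1 (- A) = mxl1 A.
Proof. by apply: eq_bigr => a _; apply: eq_bigr => b _; rewrite mxE normrN. Qed.

Lemma hermitian_le_mxl1 m (A : 'M[C]_m) :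
  Defs.hermitian A -> psd ((mxl1 A *+ 2) *: 1%:M - A).
Proof.
move=> hA x; rewrite -/(mxform _ x x) mxformBA mxformZA subr_ge0.
apply: le_trans (real_ler_norm (hermitian_mxform_real x hA)) _.
rewrite mxformE; apply: le_trans (ler_norm_sum _ _ _) _.
apply: le_trans (ler_sum _ (fun a _ => ler_norm_sum _ _ _)) _.
have e a b : `|(x a 0)^* * A a b * x b 0| = `|A a b| * (`|x a 0| * `|x b 0|).
  by rewrite !normrM norm_conjC mulrCA mulrA.
under eq_bigr do under eq_bigr do rewrite e.
apply: le_trans (_ : \sum_a \sum_b `|A a b| * (`|x a 0| ^+ 2 + `|x b 0| ^+ 2) <= _).
  by do 2!apply: ler_sum => ? _; rewrite ler_wpM2l ?mulr_le_sqrD.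
under eq_bigr do under eq_bigr do rewrite mulrDr.
under eq_bigr do rewrite big_split /=.
rewrite big_split /= mxform1 mulr2n mulrDl !mulr_sumr; apply: lerD.
  apply: ler_sum => a _; rewrite -mulr_suml.
  by apply: ler_wpM2r; [rewrite exprn_ge0 | rewrite /mxl1; apply: row_le_sum2 => ? ?].
rewrite exchange_big /=; apply: ler_sum => b _; rewrite -mulr_suml.
by apply: ler_wpM2r; [rewrite exprn_ge0 | rewrite /mxl1; apply: col_le_sum2 => ? ?].
Qed.

Lemma mxform_polar m (A : 'M[C]_m) x y :
  mxform A (x + y) (x + y) - mxform A (x - y) (x - y) =
  (mxform A x y + mxform A y x) *+ 2.
Proof. by rewrite !(mxformDl, mxformDr, mxformNl, mxformNr); ring. Qed.

Lemma mxform_parallelogram m (A : 'M[C]_m) x y :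
  mxform A (x + y) (x + y) + mxform A (x - y) (x - y) =
  (mxform A x x + mxform A y y) *+ 2.
Proof. by rewrite !(mxformDl, mxformDr, mxformNl, mxformNr); ring. Qed.

Lemma mxform_cross_le m (A D : 'M[C]_m) (c : C) :
  Defs.hermitian A -> psd (c *: D - A) -> psd (c *: D + A) ->
  forall x y, mxform A x y + (mxform A x y)^* <= c * (mxform D x x + mxform D y y).
Proof.
move=> hA pDA pDA' x y; rewrite -mxform_adj hA.
have := addr_ge0 (pDA (x + y)) (pDA' (x - y)).
rewrite -!/(mxform _ _ _) mxformBA mxformDA !mxformZA addrACA -mulrDr.
rewrite [- _ + _]addrC -(opprB (mxform A (x + y) (x + y))) mxform_polar.
by rewrite mxform_parallelogram mulrnAr -mulrnBl pmulrn_lge0 // subr_ge0.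
Qed.

Section PositiveMap.
Variables (m : nat) (alpha : 'M[C]_m -> 'M[C]_m).
Hypothesis alpha_pos : positive_map alpha.
Let alpha_lin : lin alpha := alpha_pos.1.

Lemma positive_map_psd1 : psd (alpha 1%:M).
Proof. exact: alpha_pos.2 _ (@psd1 m). Qed.

Lemma positive_map_le_mxl1 A :
  Defs.hermitian A -> psd ((mxl1 A *+ 2) *: alpha 1%:M - alpha A).
Proof.
move=> hA; have := alpha_pos.2 _ (hermitian_le_mxl1 hA).
by rewrite (linB alpha_lin) (linZ alpha_lin).
Qed.

Lemma positive_map_ge_mxl1 A :
  Defs.hermitian A -> psd ((mxl1 A *+ 2) *: alpha 1%:M + alpha A).
Proof.
move=> hA; have := positive_map_le_mxl1 (hermitianN hA).
by rewrite mxl1N (linN alpha_lin) opprK.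
Qed.

Lemma positive_map_hermitian A : Defs.hermitian A -> Defs.hermitian (alpha A).
Proof.
move=> hA; set c := mxl1 A *+ 2.
have -> : alpha A = c *: alpha 1%:M - (c *: alpha 1%:M - alpha A) by rewrite opprB addrC subrK.
apply: hermitianB; last exact/psd_hermitian/positive_map_le_mxl1.
by apply/psd_hermitian/psdZ; [rewrite mulrn_wge0 ?mxl1_ge0 | exact: positive_map_psd1].
Qed.

Lemma positive_map_adj Z : alpha (adjmx Z) = adjmx (alpha Z).
Proof.
have hRe := mxRe_hermitian Z; have hIm := mxIm_hermitian Z.
rewrite -(mxRe_Im Z) adjmxD [adjmx ('i *: _)]adjmxZ hRe hIm conjCi.
rewrite !(linD alpha_lin) !(linZ alpha_lin _ (mxIm Z)).
rewrite adjmxD [adjmx ('i *: _)]adjmxZ conjCi.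
by rewrite (positive_map_hermitian hRe) (positive_map_hermitian hIm).
Qed.

End PositiveMap.

End PositiveMaps.

Section Ampliation.
Variable R : realType.
Local Notation C := R[i].
Variables n k : nat.

Definition cvblk (u : 'cV[C]_(n * k)) (i : 'I_n) : 'cV[C]_k :=
  \col_a u (mxtens_index (i, a)) 0.

Lemma sum_mxtens_index (F : 'I_(n * k) -> C) :
  \sum_p F p = \sum_(i < n) \sum_(a < k) F (mxtens_index (i, a)).
Proof.
rewrite (reindex (@mxtens_index n k)) /=; last first.
  by exists (@mxtens_unindex n k) => x _; [apply: mxtens_indexK | apply: mxtens_unindexK].
by rewrite pair_big /=; apply: eq_bigr => -[i a].
Qed.

Lemma mxform_blk (M : 'M[C]_(n * k)) u v :
  mxform M u v = \sum_i \sum_j mxform (blk M i j) (cvblk u i) (cvblk v j).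
Proof.
rewrite mxformE sum_mxtens_index; apply: eq_bigr => i _.
rewrite exchange_big /= sum_mxtens_index; apply: eq_bigr => j _.
rewrite exchange_big mxformE; apply: eq_bigr => a _; apply: eq_bigr => b _.
by rewrite !mxE.
Qed.

Lemma blk_amp (alpha : 'M[C]_k -> 'M[C]_k) (X : 'M[C]_(n * k)) i j :
  blk (amp alpha X) i j = alpha (blk X i j).
Proof. by apply/matrixP => a b; rewrite !mxE !mxtens_indexK. Qed.

Lemma blk_adj (X : 'M[C]_(n * k)) i j : blk (adjmx X) i j = adjmx (blk X j i).
Proof. by apply/matrixP => a b; rewrite !mxE. Qed.

Lemma blk1 i j : blk (1%:M : 'M[C]_(n * k)) i j = (i == j)%:R *: 1%:M.
Proof.
apply/matrixP => a b; rewrite !mxE.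
have -> : (mxtens_index (i, a) == mxtens_index (j, b)) = (i == j) && (a == b).
  by rewrite (inj_eq (can_inj (@mxtens_indexK n k))) xpair_eqE.
by case: (i == j); case: (a == b); rewrite ?mulr1 ?mulr0.
Qed.

Lemma lin_amp (alpha : 'M[C]_k -> 'M[C]_k) : lin alpha -> lin (amp (m:=n) alpha).
Proof.
move=> alpha_lin c X Y.
have blk_lin i j : blk (c *: X + Y) i j = c *: blk X i j + blk Y i j.
  by apply/matrixP => a b; rewrite !mxE.
by apply/matrixP => p q; rewrite !mxE blk_lin alpha_lin !mxE.
Qed.

Definition mxbound m (Z : 'M[C]_m) := (mxl1 (mxRe Z) + mxl1 (mxIm Z)) *+ 2.

Definition order_bound (X : 'M[C]_(n * k)) := \sum_i \sum_j mxbound (blk X i j).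

Lemma mxbound_ge0 m (Z : 'M[C]_m) : 0 <= mxbound Z.
Proof. by rewrite mulrn_wge0 // addr_ge0 ?mxl1_ge0. Qed.

Lemma order_bound_ge0 X : 0 <= order_bound X.
Proof. by do 2!apply: sumr_ge0 => ? _; apply: mxbound_ge0. Qed.

Section PositiveAmpliation.
Variable alpha : 'M[C]_k -> 'M[C]_k.
Hypothesis alpha_pos : positive_map alpha.
Let alpha_lin : lin alpha := alpha_pos.1.

Lemma amp_hermitian (X : 'M[C]_(n * k)) :
  Defs.hermitian X -> Defs.hermitian (amp alpha X).
Proof.
move=> hX; apply/matrixP => p q.
case: (mxtens_indexP p) => i a; case: (mxtens_indexP q) => j b.
rewrite adjmxE !mxE !mxtens_indexK /= -adjmxE -positive_map_adj //.
by rewrite -blk_adj hX.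
Qed.

Lemma mxform_amp1 (u : 'cV[C]_(n * k)) :
  mxform (amp alpha 1%:M) u u = \sum_i mxform (alpha 1%:M) (cvblk u i) (cvblk u i).
Proof.
rewrite mxform_blk; apply: eq_bigr => i _.
rewrite (bigD1 i) //= big1 ?addr0 => [|j /negPf ji]; rewrite blk_amp blk1 ?eqxx.
  by rewrite (linZ alpha_lin) mxformZA mul1r.
by rewrite eq_sym ji (linZ alpha_lin) mxformZA mul0r.
Qed.

Lemma positive_map_cross_le (Z : 'M[C]_k) x y :
  mxform (alpha Z) x y + (mxform (alpha Z) x y)^* <=
  mxbound Z * (mxform (alpha 1%:M) x x + mxform (alpha 1%:M) y y).
Proof.
set D := alpha 1%:M; have hRe := mxRe_hermitian Z; have hIm := mxIm_hermitian Z.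
have cross A : Defs.hermitian A -> forall x y,
    mxform (alpha A) x y + (mxform (alpha A) x y)^* <=
    mxl1 A *+ 2 * (mxform D x x + mxform D y y).
  move=> hA; apply: mxform_cross_le; first exact: positive_map_hermitian.
    exact: positive_map_le_mxl1.
  exact: positive_map_ge_mxl1.
have Di : mxform D ('i *: y) ('i *: y) = mxform D y y.
  by rewrite mxformZl mxformZr conjCi mulrA mulNr -expr2 sqrCi opprK mul1r.
have -> : mxform (alpha Z) x y =
    mxform (alpha (mxRe Z)) x y + mxform (alpha (mxIm Z)) x ('i *: y).
  by rewrite -{1}(mxRe_Im Z) (linD alpha_lin) (linZ alpha_lin 'i) mxformDA mxformZA mxformZr.
rewrite rmorphD addrACA /mxbound mulrnDl mulrDl.
by apply: lerD; [exact: cross | rewrite -Di; exact: cross].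
Qed.

Lemma mxform_amp_le (X : 'M[C]_(n * k)) u : Defs.hermitian X ->
  mxform (amp alpha X) u u <= order_bound X * mxform (amp alpha 1%:M) u u.
Proof.
move=> hX; set Q := mxform (amp alpha X) u u.
set q := fun i => mxform (alpha 1%:M) (cvblk u i) (cvblk u i).
have q0 i : 0 <= q i by apply: positive_map_psd1.
have : Q + Q^* <= (order_bound X * \sum_i q i) *+ 2.
  rewrite /Q mxform_blk rmorph_sum -big_split /=.
  under eq_bigr do rewrite rmorph_sum -big_split /=.
  pose mb i j := mxbound (blk X i j); have mb0 i j : 0 <= mb i j by apply: mxbound_ge0.
  apply: le_trans (_ : _ <= \sum_i \sum_j mb i j * (q i + q j)) _.
    by do 2!apply: ler_sum => ? _; rewrite blk_amp; apply: positive_map_cross_le.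
  rewrite (eq_bigr (fun i => \sum_j mb i j * q i + \sum_j mb i j * q j)); last first.
    by move=> i _; rewrite -big_split; apply: eq_bigr => j _; rewrite mulrDr.
  rewrite big_split mulr2n !mulr_sumr /order_bound; apply: lerD.
    apply: ler_sum => i _; rewrite -mulr_suml.
    by apply: ler_wpM2r => //; apply: row_le_sum2.
  rewrite exchange_big /=; apply: ler_sum => j _; rewrite -mulr_suml.
  by apply: ler_wpM2r => //; apply: col_le_sum2.
rewrite mxform_amp1 -/q (CrealP (hermitian_mxform_real _ (amp_hermitian hX))).
by rewrite -mulr2n lerMn2r.
Qed.

Lemma psd_amp_order_unit (X : 'M[C]_(n * k)) t :
  Defs.hermitian X -> order_bound X <= t -> psd (amp alpha (t *: 1%:M - X)).
Proof.
move=> hX bound_t u; have amp_lin := lin_amp alpha_lin.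
rewrite -/(mxform _ u u) (linB amp_lin) (linZ amp_lin) mxformBA mxformZA subr_ge0.
apply: le_trans (mxform_amp_le u hX) _; apply: ler_wpM2r bound_t.
by rewrite mxform_amp1; apply: sumr_ge0 => i _; apply: positive_map_psd1.
Qed.

End PositiveAmpliation.

End Ampliation.

Section TensorProduct.
Variable R : comPzRingType.

Lemma tensmxDl m1 p1 m2 p2 (A A' : 'M[R]_(m1, p1)) (B : 'M[R]_(m2, p2)) :
  (A + A') *t B = A *t B + A' *t B.
Proof. by apply/matrixP => i j; rewrite !mxE mulrDl. Qed.

Lemma tensmxZl m1 p1 m2 p2 c (A : 'M[R]_(m1, p1)) (B : 'M[R]_(m2, p2)) :
  (c *: A) *t B = c *: (A *t B).
Proof. by apply/matrixP => i j; rewrite !mxE mulrA. Qed.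

Lemma tensmxZr m1 p1 m2 p2 c (A : 'M[R]_(m1, p1)) (B : 'M[R]_(m2, p2)) :
  A *t (c *: B) = c *: (A *t B).
Proof. by apply/matrixP => i j; rewrite !mxE mulrCA. Qed.

Lemma tensmx_sumr m1 p1 m2 p2 (A : 'M[R]_(m1, p1)) I (r : seq I)
    (F : I -> 'M[R]_(m2, p2)) :
  A *t (\sum_(i <- r) F i) = \sum_(i <- r) A *t F i.
Proof.
elim/big_rec2: _ => [|i y1 y2 _ <-]; first exact: tensmx0.
by apply/matrixP => p q; rewrite !mxE mulrDr.
Qed.

Lemma tensmx11 m1 m2 : (1%:M : 'M[R]_m1) *t (1%:M : 'M[R]_m2) = 1%:M.
Proof.
apply/matrixP => p q.
case: (mxtens_indexP p) => i a; case: (mxtens_indexP q) => j b.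
rewrite tensmxE !mxE (inj_eq (can_inj (@mxtens_indexK m1 m2))) xpair_eqE.
by case: (i == j); case: (a == b); rewrite ?mulr1 ?mulr0.
Qed.

End TensorProduct.

Section DualFunctional.
Variable R : realType.
Local Notation C := R[i].
Variables (n k : nat) (Cc : set ('M[C]_k -> 'M[C]_k)) (B : set 'M[C]_n)
  (phi : 'M[C]_n -> 'M[C]_k).
Hypothesis Cc_pos : forall alpha, Cc alpha -> positive_map alpha.
Local Notation M := 'M[C]_(n * k).

Lemma inP0 : inP Cc (0 : M).
Proof.
split=> [|alpha /Cc_pos [alpha_lin _]]; first exact: hermitian0.
by rewrite (lin0 (lin_amp alpha_lin)) => u; rewrite -/(mxform _ u u) mxform0A.
Qed.

Lemma inPD (X Y : M) : inP Cc X -> inP Cc Y -> inP Cc (X + Y).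
Proof.
move=> [hX pX] [hY pY]; split=> [|alpha Ca]; first exact: hermitianD.
have [alpha_lin _] := Cc_pos Ca.
by rewrite (linD (lin_amp alpha_lin)); apply: psdD; [apply: pX | apply: pY].
Qed.

Lemma inPZ (c : C) (X : M) : 0 <= c -> inP Cc X -> inP Cc (c *: X).
Proof.
move=> c0 [hX pX]; split=> [|alpha Ca]; first by apply: hermitianZ => //; apply: ger0_real.
have [alpha_lin _] := Cc_pos Ca.
by rewrite (linZ (lin_amp alpha_lin)); apply: psdZ => //; apply: pX.
Qed.

Lemma inP_order_unit (X : M) t :
  Defs.hermitian X -> order_bound X <= t -> inP Cc (t *: 1%:M - X).
Proof.
move=> hX bound_t; have t0 := le_trans (order_bound_ge0 X) bound_t.
split=> [|alpha Ca]; last exact: (psd_amp_order_unit (Cc_pos Ca) hX bound_t).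
by apply: hermitianB => //; apply: hermitianZ; [apply: ger0_real | apply: hermitian1].
Qed.

Lemma inP1 : inP Cc (1%:M : M).
Proof.
split=> [|alpha /Cc_pos alpha_pos u]; first exact: hermitian1.
rewrite -/(mxform _ u u) mxform_amp1 //.
by apply: sumr_ge0 => i _; apply: positive_map_psd1.
Qed.

Local Notation rep := (seq ('M[C]_n * 'M[C]_k)).

Definition tens_sum (s : rep) : M := \sum_(p <- s) p.1 *t p.2.
Definition dual_sum (s : rep) : C := \sum_(p <- s) \tr (phi p.1 *m p.2^T).
Definition over_B (s : rep) := forall p, p \in s -> B p.1.
Definition scale_rep (c : C) (s : rep) : rep := [seq (p.1, c *: p.2) | p <- s].

Lemma tens_sum_cat s t : tens_sum (s ++ t) = tens_sum s + tens_sum t.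
Proof. exact: big_cat. Qed.

Lemma dual_sum_cat s t : dual_sum (s ++ t) = dual_sum s + dual_sum t.
Proof. exact: big_cat. Qed.

Lemma tens_sum_scale c s : tens_sum (scale_rep c s) = c *: tens_sum s.
Proof.
by rewrite /tens_sum big_map scaler_sumr; apply: eq_bigr => p _; rewrite tensmxZr.
Qed.

Lemma dual_sum_scale c s : dual_sum (scale_rep c s) = c * dual_sum s.
Proof.
rewrite /dual_sum big_map mulr_sumr; apply: eq_bigr => p _.
by rewrite linearZ /= -mxtraceZ scalemxAr.
Qed.

Lemma over_B_cat s t : over_B s -> over_B t -> over_B (s ++ t).
Proof. by move=> Bs Bt p; rewrite mem_cat => /orP[/Bs | /Bt]. Qed.

Lemma over_B_scale c s : over_B s -> over_B (scale_rep c s).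
Proof. by rewrite /over_B /scale_rep => Bs q /mapP[p ps ->]; exact: Bs ps. Qed.

Hypothesis phi_pos : C_positive B Cc phi.

Lemma dual_sum_ge0 s : over_B s -> inP Cc (tens_sum s) -> 0 <= dual_sum s.
Proof.
move=> Bs Ps; pose x0 := (0 : 'M[C]_n, 0 : 'M[C]_k).
have nthE (V : nmodType) (F : _ -> V) :
    \sum_(p <- s) F p = \sum_(i < size s) F (nth x0 s i).
  by rewrite (big_nth x0) big_mkord.
rewrite /dual_sum nthE; apply: phi_pos; first by move=> i; apply/Bs/mem_nth.
by rewrite -(nthE _ (fun p => p.1 *t p.2)).
Qed.

(* Well-definedness of the dual functional comes from C-positivity alone: two
   representations of the same matrix differ by a representation of 0, and 0 lies in P. *)
Lemma dual_sum_unique s t :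
  over_B s -> over_B t -> tens_sum s = tens_sum t -> dual_sum s = dual_sum t.
Proof.
suff le s' t' : over_B s' -> over_B t' -> tens_sum s' = tens_sum t' ->
    dual_sum t' <= dual_sum s'.
  by move=> Bs Bt e; apply/eqP; rewrite eq_le (le _ _ Bt Bs (esym e)) (le _ _ Bs Bt e).
move=> Bs Bt e; rewrite -subr_ge0.
have := dual_sum_ge0 (over_B_cat Bs (over_B_scale (c := -1) Bt)).
rewrite dual_sum_cat dual_sum_scale tens_sum_cat tens_sum_scale e mulN1r scaleN1r subrr.
by apply; apply: inP0.
Qed.

Definition tensB (X : M) := exists2 s, over_B s & tens_sum s = X.

Definition dual (X : M) : C :=
  if pselect (exists s, over_B s /\ tens_sum s = X) is left h
  then dual_sum (projT1 (cid h)) else 0.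

Lemma dualE s X : over_B s -> tens_sum s = X -> dual X = dual_sum s.
Proof.
move=> Bs sX; rewrite /dual; case: pselect => [h|[]]; last by exists s.
by case: (cid h) => t [Bt tX] /=; apply: dual_sum_unique; rewrite // tX.
Qed.

Lemma tensB_lin c X Y : tensB X -> tensB Y -> tensB (c *: X + Y).
Proof.
move=> [s Bs <-] [t Bt <-]; exists (scale_rep c s ++ t).
  exact/over_B_cat/Bt/over_B_scale.
by rewrite tens_sum_cat tens_sum_scale.
Qed.

Lemma dual_lin c X Y : tensB X -> tensB Y -> dual (c *: X + Y) = c * dual X + dual Y.
Proof.
move=> [s Bs <-] [t Bt <-].
rewrite -tens_sum_scale -tens_sum_cat (dualE (over_B_cat (over_B_scale (c := c) Bs) Bt)) //.
by rewrite dual_sum_cat dual_sum_scale (dualE Bs) ?(dualE Bt).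
Qed.

Lemma over_B_nil : over_B [::].
Proof. by move=> p; rewrite in_nil. Qed.

Lemma tensB0 : tensB 0.
Proof. by exists [::]; rewrite ?/tens_sum ?big_nil //; apply: over_B_nil. Qed.

Lemma tensBZ c X : tensB X -> tensB (c *: X).
Proof. by move=> BX; have := tensB_lin c BX tensB0; rewrite addr0. Qed.

Lemma tensBD X Y : tensB X -> tensB Y -> tensB (X + Y).
Proof. by move=> BX BY; have := tensB_lin 1 BX BY; rewrite scale1r. Qed.

Lemma tensBB X Y : tensB X -> tensB Y -> tensB (X - Y).
Proof. by move=> BX BY; have := tensB_lin (-1) BY BX; rewrite scaleN1r addrC. Qed.

Lemma dualB X Y : tensB X -> tensB Y -> dual (X - Y) = dual X - dual Y.
Proof.
by move=> BX BY; have := dual_lin (-1) BY BX; rewrite scaleN1r mulN1r !(addrC (- _)).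
Qed.

Lemma over_B_seq1 x b : B x -> over_B [:: (x, b)].
Proof. by move=> Bx p; rewrite inE => /eqP ->. Qed.

Lemma tensB_tens x b : B x -> tensB (x *t b).
Proof.
by move=> Bx; exists [:: (x, b)]; [exact: over_B_seq1 | rewrite /tens_sum big_seq1].
Qed.

Lemma dual_tens x b : B x -> dual (x *t b) = \tr (phi x *m b^T).
Proof.
move=> Bx; rewrite (dualE (over_B_seq1 (b := b) Bx)) /dual_sum ?big_seq1 //.
by rewrite /tens_sum big_seq1.
Qed.

Lemma dual_ge0 X : tensB X -> inP Cc X -> 0 <= dual X.
Proof. by move=> [s Bs <-] Ps; rewrite (dualE Bs) //; apply: dual_sum_ge0. Qed.

Hypothesis B1 : B 1%:M.
Hypothesis B_adj : forall x, B x -> B (adjmx x).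

Lemma tensB1 : tensB 1%:M.
Proof. by rewrite -tensmx11; apply: tensB_tens. Qed.

Lemma tensB_adj X : tensB X -> tensB (adjmx X).
Proof.
move=> [s Bs <-]; exists [seq (adjmx p.1, adjmx p.2) | p <- s].
  by move=> _ /mapP[p ps ->]; apply/B_adj/Bs.
by rewrite /tens_sum big_map adjmx_sum; apply: eq_bigr => p _; rewrite adjmx_tens.
Qed.

Lemma dual_real X : tensB X -> Defs.hermitian X -> dual X \is Num.real.
Proof.
move=> BX hX; set t := order_bound X; have t0 : 0 <= t := order_bound_ge0 X.
have B1t : tensB (t *: 1%:M) by apply/tensBZ/tensB1.
have dt : dual (t *: 1%:M) \is Num.real by apply/ger0_real/dual_ge0/inPZ/inP1.
have BtX : tensB (t *: 1%:M - X) by apply: tensBB.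
have dtX : dual (t *: 1%:M - X) \is Num.real by apply/ger0_real/dual_ge0/inP_order_unit.
have -> : X = t *: 1%:M - (t *: 1%:M - X) by rewrite opprB addrC subrK.
by rewrite dualB //; apply: rpredB dt dtX.
Qed.

End DualFunctional.

Definition Rmx (R : realType) N := 'M[R[i]]_N.
HB.instance Definition _ (R : realType) N := GRing.Zmodule.on (Rmx R N).

Section RealScaling.
Variables (R : realType) (N : nat).
Definition Rmx_scale (r : R) (X : Rmx R N) : Rmx R N := (r%:C)%C *: (X : 'M[R[i]]_N).
Fact Rmx_scaleA a b X : Rmx_scale a (Rmx_scale b X) = Rmx_scale (a * b) X.
Proof. by rewrite /Rmx_scale scalerA -rmorphM. Qed.
Fact Rmx_scale1 : left_id 1 Rmx_scale.
Proof. by move=> X; rewrite /Rmx_scale rmorph1 scale1r. Qed.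
Fact Rmx_scaleDr : right_distributive Rmx_scale +%R.
Proof. by move=> a X Y; rewrite /Rmx_scale scalerDr. Qed.
Fact Rmx_scaleDl X : {morph Rmx_scale^~ X : a b / a + b}.
Proof. by move=> a b; rewrite /Rmx_scale rmorphD scalerDl. Qed.
End RealScaling.

HB.instance Definition _ (R : realType) N :=
  GRing.Zmodule_isLmodule.Build R (Rmx R N) (@Rmx_scaleA R N) (@Rmx_scale1 R N)
    (@Rmx_scaleDr R N) (@Rmx_scaleDl R N).

Lemma RmxZ (R : realType) N (r : R) (X : Rmx R N) :
  r *: X = (r%:C)%C *: (X : 'M[R[i]]_N).
Proof. by []. Qed.

Lemma real_complex_real (R : realType) (r : R) : (r%:C)%C \is Num.real.
Proof. by apply/complex_realP; exists r. Qed.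

Lemma Re_lin (R : realType) (r : R) (z w : R[i]) :
  complex.Re ((r%:C)%C * z + w) = r * complex.Re z + complex.Re w.
Proof. by case: z w => a b [c d] /=; rewrite mul0r subr0. Qed.

Definition hermitian_set {R : realType} {N : nat} : set (Rmx R N) :=
  [set X | Defs.hermitian X].

Lemma hermitian_subspace (R : realType) N : subspace (hermitian_set : set (Rmx R N)).
Proof.
split=> [|r X Y hX hY]; first exact: hermitian0.
by rewrite RmxZ; apply: hermitianD => //; apply: hermitianZ => //; apply: real_complex_real.
Qed.

Section HermitianExtension.
Variable R : realType.
Local Notation C := R[i].
Variables (n k : nat) (Cc : set ('M[C]_k -> 'M[C]_k)) (B : set 'M[C]_n)
  (phi : 'M[C]_n -> 'M[C]_k).
Hypothesis Cc_pos : forall alpha, Cc alpha -> positive_map alpha.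
Hypothesis phi_pos : C_positive B Cc phi.
Hypothesis B1 : B 1%:M.
Local Notation M := 'M[C]_(n * k).
Local Notation V := (Rmx R (n * k)).

Definition hermB : set V := [set X | tensB B X /\ Defs.hermitian X].
Definition re_dual (X : V) : R := complex.Re (dual B phi X).

Lemma hermB_subspace : subspace hermB.
Proof.
split=> [|r X Y [BX hX] [BY hY]]; first by split; [apply: tensB0 | apply: hermitian0].
split; first exact: tensB_lin.
exact: (hermitian_subspace R (n * k)).2.
Qed.

Lemma re_dual_linear : linear_on hermB re_dual.
Proof.
move=> r X Y [BX _] [BY _]; rewrite /re_dual RmxZ.
by rewrite (dual_lin Cc_pos phi_pos) // Re_lin.
Qed.

Lemma re_dual_positive : positive_on (inP Cc : set V) hermB re_dual.
Proof.
move=> X [BX _] PX; have := dual_ge0 Cc_pos phi_pos BX PX.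
by rewrite lecE => /andP[_].
Qed.

Lemma hermitian_majorized (v : V) : Defs.hermitian v -> majorized (inP Cc : set V) hermB v.
Proof.
move=> hv; have t0 := order_bound_ge0 v.
exists (order_bound v *: 1%:M : M); last exact: inP_order_unit.
split; first exact/tensBZ/tensB1.
by apply: hermitianZ; [apply: ger0_real | apply: hermitian1].
Qed.

Definition hermitian_basis : seq V :=
  [seq mxRe (delta_mx pq.1 pq.2) | pq : 'I_(n * k) * 'I_(n * k)] ++
  [seq mxRe ('i *: delta_mx pq.1 pq.2) | pq : 'I_(n * k) * 'I_(n * k)].

Lemma hermitian_adjoin_basis (X : V) :
  Defs.hermitian X -> adjoin_seq hermB hermitian_basis X.
Proof.
move=> hX; have sE := adjoin_seq_subspace hermitian_basis hermB_subspace.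
set E := adjoin_seq _ _ in sE *.
have Ebasis Y : Y \in hermitian_basis -> E Y by apply: adjoin_seq_mem hermB_subspace.
rewrite -(mxRe_id hX) [X in mxRe X]matrix_sum_delta mxRe_sum.
apply: (subspace_sum sE) => p; rewrite mxRe_sum; apply: (subspace_sum sE) => q.
rewrite [X p q]complexE scalerDl [_ * _]mulrC -scalerA mxReD.
rewrite !(mxReZ_real _ (real_complex_real _)).
rewrite -!RmxZ; apply: (subspaceD sE); apply: (subspaceZ sE); apply: Ebasis.
  by rewrite mem_cat; apply/orP; left; apply/mapP; exists (p, q); rewrite ?mem_enum.
by rewrite mem_cat; apply/orP; right; apply/mapP; exists (p, q); rewrite ?mem_enum.
Qed.

Lemma hermitian_extension : exists F : V -> R,
  [/\ linear_on (hermitian_set : set V) F,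
      positive_on (inP Cc : set V) (hermitian_set : set V) F &
      forall X, hermB X -> F X = re_dual X].
Proof.
have PD (X Y : V) : inP Cc X -> inP Cc Y -> inP Cc (X + Y) by apply: inPD.
have PZ (r : R) (X : V) : 0 <= r -> inP Cc X -> inP Cc (r *: X).
  by move=> r0; rewrite RmxZ; apply: inPZ; rewrite ?ler0c.
have maj v : v \in hermitian_basis ->
    majorized (inP Cc : set V) hermB v /\ majorized (inP Cc : set V) hermB (- v).
  move=> vb; have hv : Defs.hermitian v.
    by move: vb; rewrite mem_cat => /orP[] /mapP[pq _ ->]; apply: mxRe_hermitian.
  by split; apply: hermitian_majorized => //; apply: hermitianN.
have [F [lF pF eF]] :=
  riesz_extension PD PZ hermB_subspace re_dual_linear re_dual_positive maj.
exists F; split=> // [r X Y hX hY | X hX].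
  exact: lF (hermitian_adjoin_basis hX) (hermitian_adjoin_basis hY).
exact/pF/hermitian_adjoin_basis.
Qed.

End HermitianExtension.

Section Complexification.
Variable R : realType.
Local Notation C := R[i].
Variables (m : nat) (F : Rmx R m -> R).
Hypothesis F_lin : linear_on hermitian_set F.

Definition cplx (X : 'M[C]_m) : C := (F (mxRe X))%:C%C + 'i * (F (mxIm X))%:C%C.

Lemma cplxD X Y : cplx (X + Y) = cplx X + cplx Y.
Proof.
rewrite /cplx mxReD mxImD (linear_onD F_lin (mxRe_hermitian X) (mxRe_hermitian Y)).
by rewrite (linear_onD F_lin (mxIm_hermitian X) (mxIm_hermitian Y)) !rmorphD /= mulrDr addrACA.
Qed.

Lemma cplxZ_real (r : R) X : cplx ((r%:C)%C *: X) = (r%:C)%C * cplx X.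
Proof.
rewrite /cplx mxReZ_real ?mxImZ_real ?real_complex_real //.
have sH := hermitian_subspace R m.
rewrite (linear_onZ sH F_lin r (mxRe_hermitian X)) (linear_onZ sH F_lin r (mxIm_hermitian X)).
by rewrite !rmorphM /= mulrDr mulrCA.
Qed.

Lemma cplxZ_i X : cplx ('i *: X) = 'i * cplx X.
Proof.
rewrite /cplx mxRe_i mxIm_i.
rewrite (linear_onN (hermitian_subspace R m) F_lin (mxIm_hermitian X)).
by rewrite rmorphN /= mulrDr mulrA -expr2 sqrCi mulN1r addrC.
Qed.

Lemma cplxZ c X : cplx (c *: X) = c * cplx X.
Proof.
have -> : c = (complex.Re c)%:C%C + 'i * (complex.Im c)%:C%C := complexE c.
rewrite scalerDl [_ * _]mulrC -scalerA cplxD !cplxZ_real cplxZ_i.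
by rewrite mulrDl mulrA.
Qed.

Lemma cplx_sum I (r : seq I) (G : I -> 'M[C]_m) :
  cplx (\sum_(i <- r) G i) = \sum_(i <- r) cplx (G i).
Proof.
elim/big_rec2: _ => [|i y1 y2 _ <-]; last exact: cplxD.
by rewrite -(scale0r (0 : 'M[C]_m)) cplxZ mul0r.
Qed.

Lemma cplx_hermitian X : Defs.hermitian X -> cplx X = (F X)%:C%C.
Proof.
move=> hX; rewrite /cplx mxRe_id // mxIm_hermitian0 //.
by rewrite (linear_on0 (hermitian_subspace R m) F_lin) mulr0 addr0.
Qed.

End Complexification.

Section ExtensionMap.
Variable R : realType.
Local Notation C := R[i].
Variables (n k : nat) (G : 'M[C]_(n * k) -> C).
Hypotheses (GD : forall X Y, G (X + Y) = G X + G Y) (GZ : forall c X, G (c *: X) = c * G X).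

Definition ext_map (a : 'M[C]_n) : 'M[C]_k := \matrix_(p, q) G (a *t delta_mx p q).

Lemma ext_map_lin : lin ext_map.
Proof. by move=> c x y; apply/matrixP => p q; rewrite !mxE tensmxDl tensmxZl GD GZ. Qed.

Lemma ext_map_tr a b : \tr (ext_map a *m b^T) = G (a *t b).
Proof.
have G_sum I (r : seq I) F : G (\sum_(i <- r) F i) = \sum_(i <- r) G (F i).
  elim/big_rec2: _ => [|i y1 y2 _ <-]; last exact: GD.
  by rewrite -(scale0r (0 : 'M[C]_(n * k))) GZ mul0r.
rewrite [in RHS](matrix_sum_delta b) tensmx_sumr G_sum; apply: eq_bigr => p _.
rewrite tensmx_sumr G_sum mxE; apply: eq_bigr => q _.
by rewrite tensmxZr GZ !mxE mulrC.
Qed.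

End ExtensionMap.

Lemma tr_mul_delta (R : comPzRingType) k (A : 'M[R]_k) p q :
  \tr (A *m (delta_mx p q)^T) = A p q.
Proof.
rewrite /mxtrace (bigD1 p) //= big1 ?addr0; last first.
  by move=> i /negPf ip; rewrite mxE big1 // => j _; rewrite !mxE ip mulr0.
rewrite mxE (bigD1 q) //= big1 ?addr0; last by move=> j /negPf jq; rewrite !mxE jq andbF mulr0.
by rewrite !mxE !eqxx mulr1.
Qed.

Section DualExtension.
Variable R : realType.
Local Notation C := R[i].
Variables (n k : nat) (Cc : set ('M[C]_k -> 'M[C]_k)) (B : set 'M[C]_n)
  (phi : 'M[C]_n -> 'M[C]_k).
Hypothesis Cc_pos : forall alpha, Cc alpha -> positive_map alpha.
Hypothesis phi_pos : C_positive B Cc phi.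
Hypothesis B1 : B 1%:M.
Hypothesis B_adj : forall x, B x -> B (adjmx x).
Variable F : Rmx R (n * k) -> R.
Hypothesis F_dual : forall X, hermB B X -> F X = re_dual B phi X.

Lemma tensB_mxRe (X : 'M[C]_(n * k)) : tensB B X -> tensB B (mxRe X).
Proof. by move=> BX; apply/tensBZ/tensBD => //; apply: tensB_adj. Qed.

Lemma cplx_dual (X : 'M[C]_(n * k)) : tensB B X -> cplx F X = dual B phi X.
Proof.
move=> BX; have BRe := tensB_mxRe BX; have BIm := tensB_mxRe (tensBZ (- 'i) BX).
have hRe := mxRe_hermitian X; have hIm := mxIm_hermitian X.
have := dual_lin Cc_pos phi_pos 'i BIm BRe; rewrite addrC mxRe_Im => ->.
rewrite /cplx !F_dual /re_dual; try by split.
by rewrite !RRe_real ?(dual_real Cc_pos phi_pos B1) // addrC.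
Qed.

End DualExtension.

Theorem corollary2 (R : realType) (n k : nat)
    (Cc : set ('M[R[i]]_k -> 'M[R[i]]_k)) (B : set 'M[R[i]]_n)
    (phi : 'M[R[i]]_n -> 'M[R[i]]_k) :
  mapping_cone Cc ->
  unital_Cstar_subalg B ->
  lin_on B phi ->
  C_positive B Cc phi ->
  exists psi : 'M[R[i]]_n -> 'M[R[i]]_k,
    [/\ lin psi,
        C_positive setT Cc psi &
        forall x, B x -> psi x = phi x].
Proof.
move=> [Cc_pos _ _ _ _] [B1 _ _ _ B_adj] _ phi_pos.
have [F [F_lin F_pos F_dual]] := hermitian_extension Cc_pos phi_pos B1.
have GD := cplxD F_lin; have GZ := cplxZ F_lin.
exists (ext_map (cplx F)); split.
- exact: ext_map_lin.
- move=> N a b _ PX; rewrite (eq_bigr _ (fun i _ => ext_map_tr GD GZ (a i) (b i))).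
  by rewrite -cplx_sum // cplx_hermitian ?ler0c //; [apply: F_pos | ]; case: PX.
- move=> x Bx; apply/matrixP => p q.
  rewrite mxE (cplx_dual Cc_pos phi_pos B1 B_adj F_dual (tensB_tens _ Bx)).
  by rewrite (dual_tens Cc_pos phi_pos _ Bx) tr_mul_delta.
Qed.
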